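(* Let $q$ be a prime power, $\chi$ a multiplicative character of $\mathbb{F}_q^*$ and $\lambda$ an additive character of $\mathbb{F}_q$. Then, as formal power series in $u$, \[ 1+\sum_{n=1}^{\infty}\frac{u^n}{|GL(n,q)|}\sum_{g\in GL(n,q)}\chi(\det g)\,\lambda(\operatorname{tr} g) = \begin{cases} \dfrac{1}{1-u} & \text{if } \lambda,\chi \text{ are both trivial},\\[1mm] 1 & \text{if } \lambda \text{ is trivial and } \chi \text{ nontrivial},\\[1mm] \prod_{i\ge 1}\left(1+\dfrac{u\,G(\chi,\lambda)}{q^i}\right) & \text{if } \lambda \text{ is nontrivial}.\end{cases}\]
   Context: $GL(n,q)$ is the group of invertible $n\times n$ matrices over $\mathbb{F}_q$. The Gauss sum is $G(\chi,\lambda)=\sum_{x\in\mathbb{F}_q^*}\chi(x)\lambda(x)$. *)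

From HB Require Import structures.
From mathcomp Require Import all_boot all_order all_algebra all_field.
Set Implicit Arguments. Unset Strict Implicit. Unset Printing Implicit Defensive.
Import Order.TTheory GRing.Theory Num.Theory.
Local Open Scope ring_scope.

(* Complex values are taken in algC (algebraic complex numbers), which
   contains all values of characters of finite abelian groups. *)

(* chi : F_q^* -> C^* extended to F by 0 (only used on units). *)
Definition chi_ext (F : finFieldType) (chi : {unit F} -> algC) (x : F) : algC :=
  match insub x with Some u => chi u | None => 0 end.

Definition GLset (F : finFieldType) (n : nat) : {set 'M[F]_n} :=
  [set A : 'M[F]_n | A \in unitmx].

(* Coefficient of u^n of the LHS series:
   1 + sum_{n>=1} u^n/|GL(n,q)| sum_{g in GL(n,q)} chi(det g) lam(tr g). *)
Definition lhs_coef (F : finFieldType) (chi : {unit F} -> algC) (lam : F -> algC)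
    (n : nat) : algC :=
  if n == 0%N then 1 else
  (#|GLset F n|%:R)^-1 *
    \sum_(g in GLset F n) chi_ext chi (\det g) * lam (\tr g).

Definition gauss_sum (F : finFieldType) (chi : {unit F} -> algC) (lam : F -> algC) : algC :=
  \sum_(x : {unit F}) chi x * lam (val x).

Definition partial_prod (G : algC) (q : nat) (N : nat) : {poly algC} :=
  \prod_(1 <= i < N.+1) (1 + (G / (q%:R ^+ i)) *: 'X).

Definition converges_to (s : nat -> algC) (l : algC) : Prop :=
  forall eps : algC, 0 < eps -> exists N0 : nat, forall N : nat, (N0 <= N)%N -> `|s N - l| < eps.

(* The coefficient of u^n of the infinite product prod_{i>=1}(1 + u G/q^i)
   (as a formal power series) is the limit of the coefficients of the partial
   products. *)
Definition infprod_coef_is (G : algC) (q : nat) (n : nat) (c : algC) : Prop :=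
  converges_to (fun N => (partial_prod G q N)`_n) c.

From HB Require Import structures.
From mathcomp Require Import all_boot all_order all_algebra all_field.
From mathcomp Require Import ring.
Import Order.TTheory GRing.Theory Num.Theory.
Local Open Scope ring_scope.
Set Implicit Arguments. Unset Strict Implicit. Unset Printing Implicit Defensive.

(* Write a square matrix of size m+1 in blocks [[a, b], [c, D]].  Left
   multiplication by [[1, 0], [w, 1]] preserves the determinant and replaces D by
   D + w b; averaging lam over these shifts kills the terms with a = 0 and b <> 0
   (for a = b = 0, det A = 0), and turns those with a <> 0 into a multiple of the
   sum over m x m matrices.  Hence
   sum_A chi(det A) lam(tr A) = G(chi, lam)^n q^C(n,2) over n x n matrices, and
   dividing by |GL(n,q)| = q^C(n,2) prod_(i<=n) (q^i - 1) leaves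
   G^n / prod_(i<=n) (q^i - 1).  The series C(u) with these coefficients satisfies
   C(u) = (1 + u G/q) C(u/q), hence C(u) = P_N(u) C(u/q^N) for the partial
   products P_N of prod_(i>=1) (1 + u G/q^i); so the coefficients of P_N are
   uniformly bounded and converge to those of C at rate q^-N.  When lam is
   trivial, multiplying by diag(u, 1, ..., 1) shows that sum_A chi(det A) = 0
   unless chi is trivial. *)

Lemma sumr_eq0_twist (R : idomainType) (T : finType) (f : T -> R) (h : T -> T) (k : R) :
  injective h -> (forall x, f (h x) = k * f x) -> k != 1 -> \sum_x f x = 0.
Proof.
move=> h_inj fhE k_neq1.
have sumE : \sum_x f x = k * \sum_x f x.
  by rewrite {1}(reindex_inj h_inj) mulr_sumr; apply: eq_bigr => x _; apply: fhE.
have : (1 - k) * \sum_x f x = 0 by rewrite mulrBl mul1r -sumE subrr.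
by move/eqP; rewrite mulf_eq0 subr_eq0 eq_sym (negbTE k_neq1) => /eqP.
Qed.

Section ExtendedCharacter.
Variables (F : finFieldType) (chi : {unit F} -> algC).
Hypothesis chi_mul : forall x y : {unit F}, chi (x * y)%g = chi x * chi y.

Lemma chi_ext0 : chi_ext chi 0 = 0.
Proof. by rewrite /chi_ext insubF // unitr0. Qed.

Lemma chi_extU (u : {unit F}) : chi_ext chi (val u) = chi u.
Proof. by rewrite /chi_ext valK. Qed.

Lemma chi_ext1 : chi 1%g = 1 -> chi_ext chi 1 = 1.
Proof. by move=> chi1; rewrite -chi1 -chi_extU. Qed.

Lemma chi_extM x y : chi_ext chi (x * y) = chi_ext chi x * chi_ext chi y.
Proof.
have [->|x_neq0] := eqVneq x 0; first by rewrite mul0r chi_ext0 mul0r.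
have [->|y_neq0] := eqVneq y 0; first by rewrite mulr0 chi_ext0 mulr0.
have Ux : x \is a GRing.unit by rewrite unitfE.
have Uy : y \is a GRing.unit by rewrite unitfE.
have -> : x = val (Sub x Ux : {unit F}) by [].
have -> : y = val (Sub y Uy : {unit F}) by [].
by rewrite !chi_extU -chi_mul -chi_extU.
Qed.

Lemma gauss_sumE (lam : F -> algC) :
  gauss_sum chi lam = \sum_(x : F) chi_ext chi x * lam x.
Proof.
rewrite (bigID (fun x : F => x \is a GRing.unit)) /= [X in _ + X]big1 ?addr0; last first.
  by move=> x Ux; rewrite /chi_ext insubF ?(negbTE Ux) // mul0r.
rewrite (reindex_omap (val : {unit F} -> F) insub) => [|x Ux]; last first.
  by case: insubP => [u _ <-|] //; rewrite Ux.
by apply: eq_big => [u|u _]; rewrite ?(valP u) ?valK ?eqxx ?chi_extU.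
Qed.

End ExtendedCharacter.

Lemma sum_block_mx (R : finNzRingType) (V : nmodType) m (g : 'M[R]_(1 + m) -> V) :
  \sum_A g A = \sum_(a : R) \sum_(b : 'rV[R]_m) \sum_(c : 'cV[R]_m) \sum_(D : 'M[R]_m)
     g (block_mx a%:M b c D).
Proof.
pose blk (p : R * 'rV[R]_m * 'cV[R]_m * 'M[R]_m) : 'M[R]_(1 + m) :=
  block_mx p.1.1.1%:M p.1.1.2 p.1.2 p.2.
pose unblk (A : 'M[R]_(1 + m)) := (ulsubmx A 0 0, ursubmx A, dlsubmx A, drsubmx A).
have blk_bij : bijective blk.
  exists unblk => [[[[a b] c] D]|A].
    by rewrite /unblk /blk /= block_mxKul block_mxKur block_mxKdl block_mxKdr mxE mulr1n.
  by rewrite /unblk /blk /= -mx11_scalar submxK.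
by rewrite (reindex blk) ?pair_bigA //; apply: onW_bij.
Qed.

Lemma mul_block_unitri (R : pzRingType) m (X : 'M[R]_1) (b : 'rV_m) (c : 'cV_m)
    (D : 'M_m) (w : 'cV_m) :
  block_mx 1 0 w 1 *m block_mx X b c D = block_mx X b (w *m X + c) (w *m b + D).
Proof. by rewrite mulmx_block !mul1mx !mul0mx !addr0. Qed.

Lemma det_block_unitri (R : comPzRingType) m (w : 'cV[R]_m) :
  \det (block_mx 1 0 w 1 : 'M_(1 + m)) = 1.
Proof. by rewrite det_lblock !det1 mulr1. Qed.

Lemma exists_tr_mul (K : fieldType) m (b : 'rV[K]_m) s :
  b != 0 -> exists w : 'cV_m, \tr (w *m b) = s.
Proof.
move=> b_neq0.
have [j bj_neq0] : exists j, b 0 j != 0.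
  apply/existsP; apply: contraR b_neq0 => /existsPn b0.
  by apply/eqP/matrixP => i k; rewrite (ord1 i) mxE; apply/eqP/negbNE.
exists (\col_i (if i == j then s / b 0 j else 0)).
rewrite mxtrace_mulC /mxtrace big_ord1 mxE (bigD1 j) //= big1 => [|k k_neq_j].
  by rewrite mxE eqxx addr0 mulrC divfK.
by rewrite mxE (negbTE k_neq_j) mulr0.
Qed.

Section CharacterSums.
Variables (F : finFieldType) (chi : {unit F} -> algC) (lam : F -> algC).
Hypothesis chi_mul : forall x y : {unit F}, chi (x * y)%g = chi x * chi y.
Hypothesis chi_one : chi 1%g = 1.
Hypothesis lam_add : forall x y : F, lam (x + y) = lam x * lam y.
Hypothesis lam_zero : lam 0 = 1.

Definition char_weight n (A : 'M[F]_n) := chi_ext chi (\det A) * lam (\tr A).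
Definition char_sum n := \sum_(A : 'M[F]_n) char_weight A.

Lemma sum_GLset_char_weight n :
  \sum_(g in GLset F n) char_weight g = char_sum n.
Proof.
rewrite big_mkcond; apply: eq_bigr => A _; rewrite inE unitmxE unitfE /char_weight.
by case: eqP => // ->; rewrite chi_ext0 mul0r.
Qed.

Lemma sum_chi_det_eq0 m (u : {unit F}) : chi u != 1 ->
  \sum_(A : 'M[F]_(1 + m)) chi_ext chi (\det A) = 0.
Proof.
move=> chiu_neq1; pose P a : 'M[F]_(1 + m) := block_mx a%:M 0 0 1.
have P_inj : injective (mulmx (P (val u)) : 'M_(1 + m) -> _).
  have PV : P (val u)^-1 *m P (val u) = 1.
    rewrite mulmx_block !mulmx0 !mul0mx !addr0 !add0r !mul1mx -scalar_mxM mulVr ?(valP u) //.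
    exact: (esym (scalar_mx_block 1 m 1)).
  by move=> A B /(congr1 (mulmx (P (val u)^-1))); rewrite !mulmxA PV !mul1mx.
apply: (sumr_eq0_twist P_inj _ chiu_neq1) => A.
by rewrite det_mulmx chi_extM // det_ublock det_scalar1 det1 mulr1 chi_extU.
Qed.

Section NontrivialAdditive.
Variable s : F.
Hypothesis lam_s : lam s != 1.

Lemma sum_lam_tr_mul m (b : 'rV[F]_m) :
  \sum_(c : 'cV[F]_m) lam (\tr (c *m b)) = if b == 0 then (#|F| ^ m)%:R else 0.
Proof.
have [->|b_neq0] := eqVneq b 0.
  under eq_bigr do rewrite mulmx0 mxtrace0 lam_zero.
  by rewrite sumr_const card_mx muln1.
have [w trwb] := exists_tr_mul s b_neq0.
apply: (sumr_eq0_twist (addIr w) _ lam_s) => c.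
by rewrite /= mulmxDl mxtraceD lam_add trwb mulrC.
Qed.

Lemma sum_char_weight_block0 m (b : 'rV[F]_m) (c : 'cV[F]_m) :
  \sum_(D : 'M[F]_m) char_weight (block_mx 0%:M b c D) = 0.
Proof.
have [->|b_neq0] := eqVneq b 0.
  by apply: big1 => D _; rewrite /char_weight det_lblock det_scalar1 mul0r chi_ext0 mul0r.
have [w trwb] := exists_tr_mul s b_neq0.
apply: (sumr_eq0_twist (addrI (w *m b)) _ lam_s) => D /=.
have blockE : block_mx 0%:M b c (w *m b + D) = block_mx 1 0 w 1 *m block_mx 0%:M b c D.
  by rewrite mul_block_unitri mul_mx_scalar scale0r add0r.
rewrite /char_weight {1}blockE det_mulmx det_block_unitri mul1r !mxtrace_block mxtraceD trwb.
by rewrite addrCA lam_add mulrCA.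
Qed.

Lemma sum_char_weight_blockU m (a : F) (b : 'rV[F]_m) (c : 'cV[F]_m) : a != 0 ->
  \sum_(D : 'M[F]_m) char_weight (block_mx a%:M b (a *: c) D) =
  chi_ext chi a * lam a * char_sum m * lam (\tr (c *m b)).
Proof.
move=> a_neq0; rewrite (reindex_inj (addrI (c *m b))) /char_sum !mulr_sumr mulr_suml.
apply: eq_bigr => D _.
have blockE : block_mx a%:M b (a *: c) (c *m b + D) = block_mx 1 0 c 1 *m block_mx a%:M b 0 D.
  by rewrite mul_block_unitri mul_mx_scalar addr0.
rewrite /char_weight {1}blockE det_mulmx det_block_unitri mul1r det_ublock det_scalar1 chi_extM //.
rewrite mxtrace_block mxtraceD mxtrace_scalar mulr1n !lam_add.
ring.
Qed.

Lemma char_sumS m : char_sum (1 + m) = gauss_sum chi lam * (#|F| ^ m)%:R * char_sum m.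
Proof.
rewrite /char_sum sum_block_mx (bigD1 0) //= big1 ?add0r; last first.
  by move=> b _; apply: big1 => c _; apply: sum_char_weight_block0.
rewrite gauss_sumE [in RHS](bigD1 0) //= chi_ext0 mul0r add0r !mulr_suml.
apply: eq_bigr => a a_neq0.
under eq_bigr do rewrite (reindex_inj (scalerI a_neq0)) /=.
under eq_bigr do under eq_bigr do rewrite sum_char_weight_blockU //.
under eq_bigr do rewrite -mulr_sumr sum_lam_tr_mul.
rewrite -mulr_sumr (bigD1 0) //= eqxx big1 ?addr0 => [|b /negbTE -> //].
by rewrite /char_sum mulrAC.
Qed.

Lemma char_sumE n : char_sum n = gauss_sum chi lam ^+ n * (#|F| ^ 'C(n, 2))%:R.
Proof.
elim: n => [|m IHm].
  rewrite /char_sum (eq_bigr (fun _ => 1)) => [|A _]; last first.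
    by rewrite /char_weight det_mx00 chi_ext1 // /mxtrace big_ord0 lam_zero mulr1.
  by rewrite sumr_const card_mx expr0 mul1r.
rewrite (char_sumS m) IHm binS bin1 exprS expnD natrM.
ring.
Qed.

End NontrivialAdditive.
End CharacterSums.

Lemma coefM_eq (R : nzSemiRingType) (p r r' : {poly R}) j :
  (forall i, (i <= j)%N -> r`_i = r'`_i) -> (p * r)`_j = (p * r')`_j.
Proof. by move=> rE; rewrite !coefM; apply: eq_bigr => i _; rewrite rE ?leq_subr. Qed.

Section EulerProduct.
Variables (G : algC) (q : nat).
Hypothesis q_gt1 : (1 < q)%N.

Definition euler_coef n : algC := G ^+ n * \prod_(1 <= i < n.+1) (q%:R ^+ i - 1)^-1.

Local Notation prod_coef N n := (partial_prod G q N)`_n.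
Local Notation euler_tail N n :=
  (\sum_(k < n) prod_coef N (n - k.+1) * (euler_coef k.+1 / q%:R ^+ (N * k.+1))).

Lemma euler_coef0 : euler_coef 0 = 1.
Proof. by rewrite /euler_coef expr0 big_geq // mul1r. Qed.

Lemma q_gt0 : 0 < (q%:R : algC).
Proof. by rewrite ltr0n ltnW. Qed.

Lemma qXS_sub1_neq0 k : (q%:R : algC) ^+ k.+1 - 1 != 0.
Proof.
rewrite subr_eq0 -natrX pnatr_eq1; apply: contraTneq (ltn_expl k.+1 q_gt1) => ->.
by rewrite ltnS.
Qed.

Lemma euler_coefS k : euler_coef k.+1 * (q%:R ^+ k.+1 - 1) = G * euler_coef k.
Proof.
rewrite /euler_coef big_nat_recr //= exprS -!mulrA mulVf ?qXS_sub1_neq0 // mulr1.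
by rewrite mulrCA.
Qed.

Lemma invqX_ge0 m : 0 <= (q%:R ^+ m : algC)^-1.
Proof. by rewrite invr_ge0 exprn_ge0 // ltW // q_gt0. Qed.

Lemma invqX_le1 m : (q%:R ^+ m : algC)^-1 <= 1.
Proof. by rewrite invf_le1 ?exprn_gt0 ?q_gt0 // exprn_ege1 // ler1n ltnW. Qed.

Lemma invqX_le_invS N : (q%:R ^+ N : algC)^-1 <= N.+1%:R^-1.
Proof.
rewrite -natrX lef_pV2 ?posrE ?ltr0n ?expn_gt0 ?(ltnW q_gt1) // ler_nat.
exact: ltn_expl.
Qed.

Lemma partial_prodS N :
  partial_prod G q N.+1 = partial_prod G q N * (1 + (G / q%:R ^+ N.+1) *: 'X).
Proof. by rewrite /partial_prod big_nat_recr. Qed.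

(* The truncation at degree [d] of the series [C(u / q^N)], where [C] is the
   claimed limit series [\sum_n euler_coef n u^n]. *)
Definition euler_dilate N d : {poly algC} :=
  \poly_(k < d.+1) (euler_coef k / q%:R ^+ (N * k)).

(* [C(u) = (1 + G u / q) C(u / q)], applied to [u / q^N]. *)
Lemma euler_dilateS N d j : (j <= d)%N ->
  ((1 + (G / q%:R ^+ N.+1) *: 'X) * euler_dilate N.+1 d)`_j = (euler_dilate N d)`_j.
Proof.
move=> le_jd; rewrite mulrDl mul1r -scalerAl coefD coefZ coefXM !coef_poly !ltnS le_jd.
case: j le_jd => [|k le_kd]; first by rewrite !muln0 mulr0 addr0.
rewrite (leq_trans (leqnSn k) le_kd) /=.
set Q : algC := q%:R; have Q_neq0 : Q != 0 by rewrite gt_eqF // q_gt0.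
have QXS_neq0 := qXS_sub1_neq0 k.
rewrite !exprM -/Q; set x := Q ^+ N.+1.
have x_neq0 : x != 0 by rewrite expf_neq0.
have xE : x ^+ k.+1 = Q ^+ k.+1 * (Q ^+ N) ^+ k.+1 by rewrite -exprMn -exprS.
have -> : G / x * (euler_coef k / x ^+ k) = G * euler_coef k / x ^+ k.+1.
  by rewrite exprS; field; rewrite ?expf_neq0.
rewrite -euler_coefS xE -/Q.
by field; rewrite ?mulf_neq0 ?expf_neq0.
Qed.

(* Euler's identity in the form [C(u) = P_N(u) C(u / q^N)], up to degree [d]. *)
Lemma euler_coef_partial_prod N d j : (j <= d)%N ->
  euler_coef j = (partial_prod G q N * euler_dilate N d)`_j.
Proof.
elim: N j => [|N IHN] j le_jd.
  rewrite /partial_prod big_geq // mul1r coef_poly ltnS le_jd mul0n expr0 invr1.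
  by rewrite mulr1.
rewrite (IHN j le_jd) partial_prodS -mulrA; apply: coefM_eq => i le_ij.
by rewrite euler_dilateS // (leq_trans le_ij).
Qed.

Lemma euler_coef_split N n : euler_coef n = prod_coef N n + euler_tail N n.
Proof.
rewrite (euler_coef_partial_prod N (leqnn n)) coefMr big_ord_recl subn0 coef_poly.
rewrite muln0 expr0 invr1 mulr1 euler_coef0 mulr1; congr (_ + _).
by apply: eq_bigr => k _; rewrite coef_poly /bump /= ltnS ltn_ord.
Qed.

Lemma prod_coef0 N : prod_coef N 0 = 1.
Proof. by have := euler_coef_split N 0; rewrite big_ord0 addr0 euler_coef0. Qed.

Lemma euler_tail_le N n B : 0 <= B -> (forall j, (j < n)%N -> `|prod_coef N j| <= B) ->
  `|euler_tail N n| <= B * (\sum_(k < n) `|euler_coef k.+1|) / q%:R ^+ N.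
Proof.
move=> B_ge0 leB; apply: le_trans (ler_norm_sum _ _ _) _.
rewrite mulr_sumr mulr_suml; apply: ler_sum => k _.
rewrite normrM (normrM (euler_coef _)) (ger0_norm (invqX_ge0 _)) mulrA.
apply: ler_pM; rewrite ?mulr_ge0 ?invqX_ge0 //.
  by rewrite ler_wpM2r // leB // ltn_subrL (leq_ltn_trans _ (ltn_ord k)).
by rewrite mulnS exprD invfM -[leRHS]mulr1 ler_wpM2l ?invqX_ge0 ?invqX_le1.
Qed.

Lemma prod_coef_bounded n :
  exists2 B : algC, 0 <= B & forall N j, (j <= n)%N -> `|prod_coef N j| <= B.
Proof.
elim: n => [|n [B B_ge0 leB]].
  by exists 1 => // N j; rewrite leqn0 => /eqP ->; rewrite prod_coef0 normr1.
pose S := \sum_(k < n.+1) `|euler_coef k.+1|.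
have S_ge0 : 0 <= S by apply: sumr_ge0.
exists (B + `|euler_coef n.+1| + B * S) => [|N j]; first by rewrite !addr_ge0 ?mulr_ge0.
rewrite leq_eqVlt => /orP[/eqP -> | lt_jn]; last first.
  by apply: le_trans (leB N j lt_jn) _; rewrite -addrA lerDl addr_ge0 ?mulr_ge0.
have -> : prod_coef N n.+1 = euler_coef n.+1 - euler_tail N n.+1.
  by rewrite [in euler_coef n.+1](euler_coef_split N n.+1) addrK.
apply: le_trans (ler_normB _ _) _; rewrite -addrA; apply: ler_wpDl => //.
apply: lerD => //.
apply: le_trans (euler_tail_le B_ge0 (fun j lt_jn => leB N j (ltnSE lt_jn))) _.
by rewrite -[leRHS]mulr1 ler_wpM2l ?mulr_ge0 ?invqX_le1.
Qed.

Lemma prod_coef_cvg n : converges_to (fun N => prod_coef N n) (euler_coef n).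
Proof.
move=> eps eps_gt0; have [B B_ge0 leB] := prod_coef_bounded n.
pose K := B * \sum_(k < n) `|euler_coef k.+1|.
have K_ge0 : 0 <= K by rewrite mulr_ge0 // sumr_ge0.
exists (Num.Def.archi_bound (K / eps)) => N le_bound_N.
have -> : prod_coef N n - euler_coef n = - euler_tail N n.
  by rewrite [in euler_coef n](euler_coef_split N n) opprD addrA subrr add0r.
rewrite normrN.
apply: le_lt_trans (euler_tail_le B_ge0 (fun j lt_jn => leB N j (ltnW lt_jn))) _.
apply: le_lt_trans (ler_wpM2l K_ge0 (invqX_le_invS N)) _.
rewrite -/K ltr_pdivrMr ?ltr0n // -ltr_pdivrMl //.
rewrite mulrC; apply: lt_le_trans (archi_boundP (divr_ge0 K_ge0 (ltW eps_gt0))) _.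
by rewrite ler_nat leqW.
Qed.

End EulerProduct.

Lemma exists_neq_of_not_forall (T : finType) (U : eqType) (f : T -> U) (a : U) :
  ~ (forall x, f x = a) -> exists x, f x != a.
Proof.
move=> not_all; have [/forallP all_eq|/forallPn] := boolP [forall x, f x == a].
  by case: not_all => x; apply/eqP.
by move=> [x]; exists x.
Qed.

Section LhsCoef.
Variables (F : finFieldType) (chi : {unit F} -> algC) (lam : F -> algC).
Hypothesis chi_mul : forall x y : {unit F}, chi (x * y)%g = chi x * chi y.
Hypothesis chi_one : chi 1%g = 1.
Hypothesis lam_add : forall x y : F, lam (x + y) = lam x * lam y.
Hypothesis lam_zero : lam 0 = 1.

Lemma card_GLset n :
  #|GLset F n.+1| = (#|F| ^ 'C(n.+1, 2) * \prod_(1 <= i < n.+2) (#|F| ^ i - 1))%N.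
Proof. by rewrite -card_GL // cardsT /= card_sub; apply: eq_card => A; rewrite !inE. Qed.

Lemma card_GLset_neq0 n : (#|GLset F n|%:R : algC) != 0.
Proof. by rewrite pnatr_eq0 -lt0n; apply/card_gt0P; exists 1%:M; rewrite inE unitmx1. Qed.

Lemma lhs_coef_trivial n :
  (forall x, lam x = 1) -> (forall x, chi x = 1) -> lhs_coef chi lam n = 1.
Proof.
move=> lam1 chi1; case: n => [|n] //; rewrite /lhs_coef /=.
rewrite (eq_bigr (fun _ => 1)) => [|g]; last first.
  rewrite inE unitmxE lam1 mulr1 => Udet.
  by rewrite -[\det g]/(val (Sub (\det g) Udet : {unit F})) chi_extU.
by rewrite sumr_const mulVf // card_GLset_neq0.
Qed.

Lemma lhs_coef_chi_nontrivial n (u : {unit F}) :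
  (forall x, lam x = 1) -> chi u != 1 -> lhs_coef chi lam n = (n == 0%N)%:R.
Proof.
move=> lam1 chiu_neq1; case: n => [|n] //; rewrite /lhs_coef /= sum_GLset_char_weight.
rewrite /char_sum (eq_bigr (fun A => chi_ext chi (\det A))) => [|A _].
  by rewrite (sum_chi_det_eq0 chi_mul n chiu_neq1) mulr0.
by rewrite /char_weight lam1 mulr1.
Qed.

Lemma lhs_coef_euler n (s : F) : lam s != 1 ->
  lhs_coef chi lam n = euler_coef (gauss_sum chi lam) #|F| n.
Proof.
move=> lam_s; case: n => [|n]; first by rewrite euler_coef0.
have q_gt1 := finNzRing_gt1 F; set q := #|F| in q_gt1 *.
rewrite /lhs_coef /= sum_GLset_char_weight (char_sumE chi_mul chi_one lam_add lam_zero lam_s).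
rewrite card_GLset -/q natrM natr_prod /euler_coef prodfV.
rewrite (eq_bigr (fun i => (q%:R : algC) ^+ i - 1)) => [|i _]; last first.
  by rewrite natrB ?natrX // expn_gt0 ltnW.
have prod_neq0 : \prod_(1 <= i < n.+2) ((q%:R : algC) ^+ i - 1) != 0.
  rewrite prodf_seq_neq0; apply/allP => -[|i]; rewrite ?mem_index_iota // => _.
  by rewrite (qXS_sub1_neq0 q_gt1).
have qC_neq0 : ((q ^ 'C(n.+1, 2))%:R : algC) != 0 by rewrite pnatr_eq0 -lt0n expn_gt0 ltnW.
by rewrite invfM [X in _ * X]mulrC mulrACA mulVf // mul1r mulrC.
Qed.

End LhsCoef.

Theorem theorem1 (F : finFieldType) (chi : {unit F} -> algC) (lam : F -> algC)
    (chi_mul : forall x y : {unit F}, chi (x * y)%g = chi x * chi y)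
    (chi_one : chi 1%g = 1)
    (lam_add : forall x y : F, lam (x + y) = lam x * lam y)
    (lam_zero : lam 0 = 1) :
  let q := #|F| in
  [/\ ((forall x, lam x = 1) -> (forall x, chi x = 1) ->
         forall n : nat, lhs_coef chi lam n = 1),
      ((forall x, lam x = 1) -> ~ (forall x, chi x = 1) ->
         forall n : nat, lhs_coef chi lam n = (n == 0%N)%:R) &
      (~ (forall x, lam x = 1) ->
         forall n : nat, infprod_coef_is (gauss_sum chi lam) q n (lhs_coef chi lam n))].
Proof.
move=> q; split=> [lam1 chi1 n | lam1 /exists_neq_of_not_forall[u chiu] n |
                   /exists_neq_of_not_forall[s lam_s] n].
- exact: lhs_coef_trivial.
- exact: lhs_coef_chi_nontrivial chiu.
- rewrite (lhs_coef_euler chi_mul chi_one lam_add lam_zero n lam_s).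
  exact: prod_coef_cvg (finNzRing_gt1 F) n.
Qed.
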